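(* Let $\mathcal H$ be a $d$-dimensional Hilbert space with orthonormal basis $\lvert1\rangle,\dots,\lvert d\rangle$, set $\widetilde E_{d(n-1)+m}=\lvert n\rangle\langle m\rvert$ for $n,m\in\{1,\dots,d\}$, and let $\mathcal E:\mathcal L(\mathcal H)\to\mathcal L(\mathcal H)$ be a quantum channel with $\mathcal E(\rho)=\sum_{i,j}\widetilde E_i\rho\widetilde E_j^\dagger\chi_{ij}$. Let $\mathcal H^\dagger$ be a Hilbert space with orthonormal basis $\{\lvert j\rangle:j\in\{1,\dots,d^2\}\}$, and define $\chi=\sum_{j,k}\chi_{jk}\lvert j\rangle\langle k\rvert$ and, for $\rho\in\mathcal L(\mathcal H)$, $\widetilde\rho=\sum_{j,k}\operatorname{tr}(\widetilde E_j\rho\widetilde E_k^\dagger)\lvert j\rangle\langle k\rvert$. Then, up to a unitary transformation on $\mathcal H^\dagger$, the complementary channel $\mathcal E^\dagger:\mathcal L(\mathcal H)\to\mathcal L(\mathcal H^\dagger)$ is given by $$\mathcal E^\dagger(\rho)=\sqrt{\chi}^{\,*}\,\widetilde\rho\,\sqrt{\chi}^{\,*}.$$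
   Context: The complementary channel of $\mathcal E$ is $\rho\mapsto\operatorname{tr}_B(U\rho U^\dagger)$ where $U$ is an isometric extension of $\mathcal E$ (output space $B$, environment $\mathcal H^\dagger$); it is defined up to a unitary on the environment. $\sqrt\chi$ is the positive semidefinite square root of the (positive semidefinite) matrix $\chi$, and $^*$ denotes entrywise complex conjugation in the basis $\{\lvert j\rangle\}$. *)

From HB Require Import structures.
From mathcomp Require Import all_boot all_order all_algebra.
From Stdlib Require Import ClassicalEpsilon.
Set Implicit Arguments. Unset Strict Implicit. Unset Printing Implicit Defensive.
Import Order.TTheory GRing.Theory Num.Theory.
Local Open Scope ring_scope.

Section Defs.
Variable C : numClosedFieldType.

Definition adj m n (A : 'M[C]_(m, n)) : 'M[C]_(n, m) := (map_mx Num.conj A)^T.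

(* entrywise complex conjugation  A^*  *)
Definition cconj m n (A : 'M[C]_(m, n)) : 'M[C]_(m, n) := map_mx Num.conj A.

Definition psdmx n (A : 'M[C]_n) : Prop :=
  adj A = A /\ forall x : 'cV[C]_n, 0 <= (adj x *m A *m x) 0 0.

(* the positive semidefinite square root (unique when A is psd) *)
Definition sqrtmx n (A : 'M[C]_n) : 'M[C]_n :=
  epsilon (inhabits 0) (fun S => psdmx S /\ S *m S = A).

Definition isometry m n (U : 'M[C]_(m, n)) : Prop := adj U *m U = 1%:M.
Definition unitary n (V : 'M[C]_n) : Prop := adj V *m V = 1%:M /\ V *m adj V = 1%:M.

(* Tensor product index convention: |b> (x) |e>  <->  mxvec_index b e *)
Definition ptrace2 m n (M : 'M[C]_(m * n)) : 'M[C]_m :=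
  \matrix_(i, j) \sum_(e < n) M (mxvec_index i e) (mxvec_index j e).
Definition ptrace1 m n (M : 'M[C]_(m * n)) : 'M[C]_n :=
  \matrix_(k, l) \sum_(b < m) M (mxvec_index b k) (mxvec_index b l).

(* Etilde_{d n + m} = |n><m|  (0-based indices n, m < d) *)
Definition Etil d (k : 'I_(d * d)) : 'M[C]_d :=
  \matrix_(i, j) ((i * d + j)%N == k :> nat)%:R.

Definition chi_channel d (chi : 'M[C]_(d * d)) (rho : 'M[C]_d) : 'M[C]_d :=
  \sum_(i < d * d) \sum_(j < d * d) chi i j *: (Etil i *m rho *m adj (Etil j)).

Definition rho_tilde d (rho : 'M[C]_d) : 'M[C]_(d * d) :=
  \matrix_(j, k) \tr (Etil j *m rho *m adj (Etil k)).

Definition isometric_extension d e (Ech : 'M[C]_d -> 'M[C]_d)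
  (U : 'M[C]_(d * e, d)) : Prop :=
  isometry U /\ forall rho, ptrace2 (U *m rho *m adj U) = Ech rho.

Definition complementary d e (U : 'M[C]_(d * e, d)) (rho : 'M[C]_d) : 'M[C]_e :=
  ptrace1 (U *m rho *m adj U).

End Defs.

Set Warnings "-notation-overridden,-ambiguous-paths".
From Pilot Require Import Defs.
From mathcomp Require Import all_boot all_order all_algebra.
From Stdlib Require Import ClassicalEpsilon.
Set Implicit Arguments. Unset Strict Implicit. Unset Printing Implicit Defensive.
Import GRing.Theory Num.Theory.
Local Open Scope ring_scope.

(* An operator U : H -> B (x) Env is the same thing as the family of its Kraus
   operators K_k = (1 (x) <k|) U: then tr_Env (U rho U^dag) = sum_k K_k rho K_k^dag,
   U^dag U = sum_k K_k^dag K_k, and the complementary channel is the Gram matrix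
   [tr (K_k rho K_l^dag)]_(k,l).  Mixing a family by a matrix G, K'_k = sum_l G_lk K_l,
   replaces the channel coefficients by G G^dag and the Gram matrix M by G^T M G^*.
   With K_l = Etil_l and G = sqrt chi (Hermitian, G G^dag = chi) this gives the channel
   E and the Gram matrix sqrt(chi)^* rho~ sqrt(chi)^*, and trace preservation makes U
   an isometry.  Conversely, two families with n operators inducing the same channel
   differ by a unitary mixing: the matrices P, Q whose columns are the vectorised
   operators satisfy P P^dag = Q Q^dag, hence Q = P W with W unitary. *)

Section Kraus.
Variable C : numClosedFieldType.
Local Open Scope sesquilinear_scope.

Lemma adjE m n (A : 'M[C]_(m, n)) : adj A = A^t*.
Proof. by rewrite /adj map_trmx. Qed.

Lemma adjM m n p (A : 'M[C]_(m, n)) (B : 'M[C]_(n, p)) :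
  adj (A *m B) = adj B *m adj A.
Proof. by rewrite !adjE trmx_mul map_mxM. Qed.

Lemma adjZ m n a (A : 'M[C]_(m, n)) : adj (a *: A) = a^* *: adj A.
Proof. by apply/matrixP => i j; rewrite !mxE rmorphM. Qed.

Lemma adj_sum m n I (r : seq I) (F : I -> 'M[C]_(m, n)) :
  adj (\sum_(i <- r) F i) = \sum_(i <- r) adj (F i).
Proof. by rewrite /adj map_mx_sum raddf_sum. Qed.

Lemma mxtrace_mul_delta n (X : 'M[C]_n) i j : \tr (X *m delta_mx j i) = X i j.
Proof.
rewrite /mxtrace (bigD1 i) //= big1 ?addr0.
  rewrite mxE (bigD1 j) //= big1 ?addr0; first by rewrite mxE !eqxx mulr1.
  by move=> l /negbTE nlj; rewrite mxE nlj mulr0.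
move=> k /negbTE nki; rewrite mxE big1 // => l _.
by rewrite mxE nki andbF mulr0.
Qed.

Lemma mxtrace_mul_inj n (X Y : 'M[C]_n) :
  (forall rho, \tr (X *m rho) = \tr (Y *m rho)) -> X = Y.
Proof. by move=> eqXY; apply/matrixP => i j; rewrite -!mxtrace_mul_delta eqXY. Qed.

Lemma big_mxvec_index m n (F : 'I_(m * n) -> C) :
  \sum_r F r = \sum_i \sum_j F (mxvec_index i j).
Proof.
rewrite pair_big (reindex (uncurry (@mxvec_index m n))) /=.
  by apply: eq_bigr => -[i j].
exact: curry_mxvec_bij.
Qed.

Definition kraus p e q (U : 'M[C]_(p * e, q)) (k : 'I_e) : 'M[C]_(p, q) :=
  \matrix_(b, c) U (mxvec_index b k) c.

Definition kraus_stack p e q (F : 'I_e -> 'M[C]_(p, q)) : 'M[C]_(p * e, q) :=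
  \matrix_(r, c) mxvec (\matrix_(b, k) F k b c) 0 r.

Definition kraus_gram n p q (F : 'I_n -> 'M[C]_(p, q)) (rho : 'M[C]_q) : 'M[C]_n :=
  \matrix_(k, l) \tr (F k *m rho *m adj (F l)).

Lemma kraus_stackK p e q (F : 'I_e -> 'M[C]_(p, q)) k : kraus (kraus_stack F) k = F k.
Proof. by apply/matrixP => b c; rewrite !mxE mxvecE mxE. Qed.

Lemma eq_kraus_gram n p q (F G : 'I_n -> 'M[C]_(p, q)) rho :
  F =1 G -> kraus_gram F rho = kraus_gram G rho.
Proof. by move=> eqFG; apply/matrixP => k l; rewrite !mxE !eqFG. Qed.

Lemma ptrace2_kraus p e q (U : 'M[C]_(p * e, q)) rho :
  ptrace2 (U *m rho *m adj U) = \sum_k kraus U k *m rho *m adj (kraus U k).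
Proof.
apply/matrixP => i j; rewrite !mxE summxE; apply: eq_bigr => k _.
rewrite !mxE; apply: eq_bigr => c _; rewrite !mxE; congr (_ * _).
by apply: eq_bigr => c' _; rewrite !mxE.
Qed.

Lemma complementary_kraus d e (U : 'M[C]_(d * e, d)) rho :
  complementary U rho = kraus_gram (kraus U) rho.
Proof.
apply/matrixP => k l; rewrite !mxE; apply: eq_bigr => b _.
rewrite !mxE; apply: eq_bigr => c _; rewrite !mxE; congr (_ * _).
by apply: eq_bigr => c' _; rewrite !mxE.
Qed.

Lemma adj_mul_kraus p e q (U : 'M[C]_(p * e, q)) :
  adj U *m U = \sum_k adj (kraus U k) *m kraus U k.
Proof.
apply/matrixP => i j; rewrite !mxE summxE big_mxvec_index exchange_big.
by apply: eq_bigr => k _; rewrite !mxE; apply: eq_bigr => b _; rewrite !mxE.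
Qed.

Lemma kraus_trace_preserving_isometry n p q (F : 'I_n -> 'M[C]_(p, q)) :
  (forall rho, \tr (\sum_k F k *m rho *m adj (F k)) = \tr rho) ->
  \sum_k adj (F k) *m F k = 1%:M.
Proof.
move=> TP; apply: mxtrace_mul_inj => rho.
rewrite mul1mx -[RHS]TP mulmx_suml !raddf_sum /=.
by apply: eq_bigr => k _; rewrite -mulmxA mxtrace_mulC.
Qed.

Definition kraus_mix n p q (G : 'M[C]_n) (A : 'I_n -> 'M[C]_(p, q)) k :
    'M[C]_(p, q) :=
  \sum_l G l k *: A l.

Lemma kraus_mix_sandwich n p q (G : 'M[C]_n) (A : 'I_n -> 'M[C]_(p, q)) rho k k' :
  kraus_mix G A k *m rho *m adj (kraus_mix G A k') =
  \sum_l \sum_l' (G l k * (G l' k')^*) *: (A l *m rho *m adj (A l')).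
Proof.
rewrite /kraus_mix adj_sum !mulmx_suml; apply: eq_bigr => l _.
rewrite mulmx_sumr; apply: eq_bigr => l' _.
by rewrite adjZ -!scalemxAl -scalemxAr scalerA.
Qed.

Lemma sum_kraus_mix_sandwich n p q (G : 'M[C]_n) (A : 'I_n -> 'M[C]_(p, q)) rho :
  \sum_k kraus_mix G A k *m rho *m adj (kraus_mix G A k) =
  \sum_l \sum_l' (G *m adj G) l l' *: (A l *m rho *m adj (A l')).
Proof.
under eq_bigr do rewrite kraus_mix_sandwich.
rewrite exchange_big; apply: eq_bigr => l _.
rewrite exchange_big; apply: eq_bigr => l' _.
by rewrite -scaler_suml !mxE; congr (_ *: _); apply: eq_bigr => k _; rewrite !mxE.
Qed.

Lemma kraus_gram_mix n p q (G : 'M[C]_n) (A : 'I_n -> 'M[C]_(p, q)) rho :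
  kraus_gram (kraus_mix G A) rho = G^T *m kraus_gram A rho *m cconj G.
Proof.
apply/matrixP => k k'; rewrite [LHS]mxE kraus_mix_sandwich !raddf_sum /=.
under eq_bigr do rewrite raddf_sum /=.
rewrite mxE exchange_big; apply: eq_bigr => l' _; rewrite mxE mulr_suml.
by apply: eq_bigr => l _; rewrite !mxE mxtraceZ -!mulrA [_ * (G l' k')^*]mulrC.
Qed.

End Kraus.

Section PsdSqrt.
Variable C : numClosedFieldType.
Local Open Scope sesquilinear_scope.

Lemma psdmx_congr m n (A : 'M[C]_m) (M : 'M[C]_(m, n)) :
  psdmx A -> psdmx (M^t* *m A *m M).
Proof.
rewrite /psdmx !adjE => -[A_herm A_ge0]; split.
  by rewrite !trmx_mul !map_mxM trmxCK A_herm mulmxA.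
move=> x; have := A_ge0 (M *m x).
by rewrite adjM !adjE !mulmxA.
Qed.

Lemma psdmx_diag_ge0 n (A : 'M[C]_n) i : psdmx A -> 0 <= A i i.
Proof.
move=> [_ /(_ (delta_mx i 0))].
have -> : adj (delta_mx i 0 : 'cV[C]_n) = delta_mx 0 i.
  by apply/matrixP => k l; rewrite !mxE conjC_nat andbC.
by rewrite -rowE -colE !mxE.
Qed.

Lemma psdmx_diag_mx n (D : 'rV[C]_n) : (forall i, 0 <= D 0 i) -> psdmx (diag_mx D).
Proof.
move=> D_ge0; split.
  rewrite adjE tr_diag_mx map_diag_mx; congr diag_mx.
  by apply/rowP => i; rewrite !mxE; apply: geC0_conj.
move=> x; rewrite adjE mxE; apply: sumr_ge0 => j _; rewrite mul_mx_diag !mxE.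
by rewrite mulrAC mulr_ge0 // mulrC mul_conjC_ge0.
Qed.

Lemma psdmx_spectral n (A : 'M[C]_n) : psdmx A ->
  A = (spectralmx A)^t* *m diag_mx (spectral_diag A) *m spectralmx A.
Proof.
move=> [A_herm _]; rewrite -invmx_unitary ?spectral_unitarymx //.
by apply/orthomx_spectralP/normalmxP; rewrite -adjE A_herm.
Qed.

Lemma psdmx_spectral_diag_ge0 n (A : 'M[C]_n) i : psdmx A -> 0 <= spectral_diag A 0 i.
Proof.
move=> psdA; set P := spectralmx A.
have /unitarymxP PP := spectral_unitarymx A.
have psd_diag : psdmx (diag_mx (spectral_diag A)).
  rewrite (_ : diag_mx _ = P^t*^t* *m A *m P^t*); first exact: psdmx_congr.
  by rewrite trmxCK [in RHS](psdmx_spectral psdA) !mulmxA PP mul1mx -mulmxA PP mulmx1.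
by have := psdmx_diag_ge0 i psd_diag; rewrite mxE eqxx mulr1n.
Qed.

Lemma psdmx_sqrt_exists n (A : 'M[C]_n) : psdmx A -> exists S, psdmx S /\ S *m S = A.
Proof.
move=> psdA; set P := spectralmx A; set D := spectral_diag A.
have /unitarymxP PP := spectral_unitarymx A.
pose sD := \row_i sqrtC (D 0 i).
have sD_ge0 i : 0 <= sD 0 i.
  by rewrite /sD mxE sqrtC_ge0 psdmx_spectral_diag_ge0.
have sD2 : diag_mx sD *m diag_mx sD = diag_mx D.
  apply/matrixP => i j; rewrite mul_diag_mx !mxE.
  case: eqP => [->|_]; last by rewrite !mulr0n mulr0.
  by rewrite !mulr1n -expr2 sqrtCK.
exists (P^t* *m diag_mx sD *m P).
split; first exact: psdmx_congr (psdmx_diag_mx sD_ge0).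
rewrite [RHS](psdmx_spectral psdA) -/P -/D !mulmxA.
by rewrite -(mulmxA (P^t* *m diag_mx sD)) PP mulmx1 -(mulmxA (P^t*)) sD2.
Qed.

Lemma sqrtmxP n (A : 'M[C]_n) :
  psdmx A -> psdmx (sqrtmx A) /\ sqrtmx A *m sqrtmx A = A.
Proof.
move=> /psdmx_sqrt_exists exS.
exact: (epsilon_spec (inhabits 0) (fun S => psdmx S /\ S *m S = A) exS).
Qed.

End PsdSqrt.

Section SqrtChiDilation.
Variables (C : numClosedFieldType) (d : nat) (chi S : 'M[C]_(d * d)).
Hypotheses (S_herm : adj S = S) (S_sq : S *m S = chi).

Definition chi_dilation : 'M[C]_(d * (d * d), d) :=
  kraus_stack (kraus_mix S (@Etil C d)).

Lemma kraus_chi_dilation k : kraus chi_dilation k = kraus_mix S (@Etil C d) k.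
Proof. exact: kraus_stackK. Qed.

Lemma ptrace2_chi_dilation rho :
  ptrace2 (chi_dilation *m rho *m adj chi_dilation) = chi_channel chi rho.
Proof.
rewrite ptrace2_kraus; under eq_bigr do rewrite kraus_chi_dilation.
by rewrite sum_kraus_mix_sandwich S_herm S_sq.
Qed.

Lemma chi_dilation_isometric_extension (Ech : 'M[C]_d -> 'M[C]_d) :
  (forall rho, Ech rho = chi_channel chi rho) ->
  (forall rho, \tr (Ech rho) = \tr rho) -> isometric_extension Ech chi_dilation.
Proof.
move=> Ech_def Ech_TP; split=> [|rho]; last by rewrite ptrace2_chi_dilation Ech_def.
rewrite /Defs.isometry adj_mul_kraus.
apply: kraus_trace_preserving_isometry => rho.
by rewrite -ptrace2_kraus ptrace2_chi_dilation -Ech_def Ech_TP.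
Qed.

Lemma complementary_chi_dilation rho :
  complementary chi_dilation rho = cconj S *m rho_tilde rho *m cconj S.
Proof.
rewrite complementary_kraus (eq_kraus_gram _ kraus_chi_dilation) kraus_gram_mix.
by rewrite -[in S^T]S_herm /adj trmxK.
Qed.

End SqrtChiDilation.

Section UnitaryFreedom.
Variable C : numClosedFieldType.
Local Open Scope sesquilinear_scope.
Local Notation "B ^!" :=
  (orthomx Num.conj (mx_of_hermitian (hermitian1mx _)) B) : matrix_set_scope.

Lemma mulmx_trmxC_eq0 p q (A : 'M[C]_(p, q)) : A *m A^t* = 0 -> A = 0.
Proof.
move=> /matrixP AA0; apply/matrixP => i j; have := AA0 i i; rewrite !mxE => sum0.
have norm_ge0 k : true -> 0 <= A i k * (A^t*) k i by rewrite !mxE mul_conjC_ge0.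
have /eqP := psumr_eq0P norm_ge0 sum0 (i := j) isT.
by rewrite !mxE mulf_eq0 conjC_eq0 orbb => /eqP.
Qed.

Lemma gram_eq_annihilate m n k (P Q : 'M[C]_(m, n)) (M : 'M[C]_(k, m)) :
  P *m P^t* = Q *m Q^t* -> M *m P = 0 -> M *m Q = 0.
Proof.
move=> PQ MP0; apply: mulmx_trmxC_eq0.
have gramM X : M *m X *m (M *m X)^t* = M *m (X *m X^t*) *m M^t*.
  by rewrite trmx_mul map_mxM !mulmxA.
by rewrite gramM -PQ -gramM MP0 mul0mx.
Qed.

Lemma schmidt_row_base_eqmx p n (A : 'M[C]_(p, n)) : (schmidt (row_base A) :=: A)%MS.
Proof. exact: eqmx_trans (eqmx_schmidt_free (row_base_free A)) (eq_row_base A). Qed.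

Lemma unitarymx_complete r n (A : 'M[C]_(r, n)) :
  A \is unitarymx -> col_mx A (schmidt (row_base A^!%MS)) \is unitarymx.
Proof.
move=> /unitarymxP AA; have compl_eq := schmidt_row_base_eqmx A^!%MS.
apply/unitarymxP; rewrite tr_col_mx map_row_mx mul_col_row AA.
rewrite (unitarymxP (schmidt_unitarymx _ (rank_leq_col _))).
by rewrite !(orthomx1P _) -?scalar_mx_block // ?compl_eq // orthomx_sym compl_eq.
Qed.

Lemma unitarymx_col_transport r k k' n (A B : 'M[C]_(r, n))
    (A' : 'M[C]_(k, n)) (B' : 'M[C]_(k', n)) :
  k = k' -> (r + k)%N = n ->
  col_mx A A' \is unitarymx -> col_mx B B' \is unitarymx ->
  exists2 W : 'M[C]_n, W \is unitarymx &
    forall p (X : 'M[C]_(p, n)), X *m A'^t* = 0 -> X *m W = X *m A^t* *m B.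
Proof.
move=> eq_k eq_n; subst k' n => uA uB.
exists ((col_mx A A')^t* *m col_mx B B'); first by rewrite mul_unitarymx ?trmxC_unitary.
move=> p X XA'0; rewrite tr_col_mx map_row_mx mul_row_col mulmxDr !mulmxA XA'0.
by rewrite mul0mx addr0.
Qed.

Lemma mulmx_trmxC_unitary_sub m r n (X : 'M[C]_(m, n)) (A : 'M[C]_(r, n)) :
  A \is unitarymx -> (X <= A)%MS -> X *m A^t* *m A = X.
Proof.
by move=> /unitarymxP AA /submxP[Y ->]; rewrite -(mulmxA Y) AA mulmx1.
Qed.

Theorem unitary_freedom m n (P Q : 'M[C]_(m, n)) :
  P *m P^t* = Q *m Q^t* -> exists2 W : 'M[C]_n, W \is unitarymx & Q = P *m W.
Proof.
(* Sp is an orthonormal basis of the row space of P and Xp P = Sp; equal Gram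
   matrices make T = Xp Q orthonormal as well, and W maps a completion of Sp to a
   completion of T. *)
move=> PQ.
pose Sp := schmidt (row_base P); pose Sp' := schmidt (row_base P^!%MS).
have SpP : (Sp :=: P)%MS := schmidt_row_base_eqmx P.
have uSp : Sp \is unitarymx by apply: schmidt_unitarymx; exact: rank_leq_col.
have Sp'P : (Sp' :=: P^!)%MS := schmidt_row_base_eqmx P^!%MS.
have PSp'0 : P *m Sp'^t* = 0 by apply/orthomx1P; rewrite orthomx_sym Sp'P.
pose Xp := Sp *m pinvmx P; have XpP : Xp *m P = Sp by apply: mulmxKpV; rewrite SpP.
pose T := Xp *m Q.
have uT : T \is unitarymx.
  apply/unitarymxP; rewrite trmx_mul map_mxM mulmxA -(mulmxA Xp) -PQ.
  by rewrite !mulmxA XpP -mulmxA -map_mxM -trmx_mul XpP; apply/unitarymxP.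
have eq_rank : \rank P^!%MS = \rank T^!%MS by rewrite !rank_ortho (mxrank_unitary uT).
have [W uW PW] := unitarymx_col_transport eq_rank (add_rank_ortho P)
  (schmidt_complete_unitarymx P) (unitarymx_complete uT).
have PXpQ : P *m Sp^t* *m Xp *m Q = Q.
  apply/eqP; rewrite -subr_eq0 -[X in _ - X]mul1mx -mulmxBl.
  apply/eqP/(gram_eq_annihilate PQ).
  by rewrite mulmxBl mul1mx -(mulmxA _ Xp) XpP mulmx_trmxC_unitary_sub ?SpP ?subrr.
by exists W => //; rewrite (PW _ _ PSp'0) mulmxA.
Qed.

End UnitaryFreedom.

Section KrausFreedom.
Variable C : numClosedFieldType.
Local Open Scope sesquilinear_scope.

Definition kraus_vec_mx n p q (A : 'I_n -> 'M[C]_(p, q)) : 'M[C]_(p * q, n) :=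
  \matrix_(r, l) mxvec (A l) 0 r.

Lemma sandwich_delta p q (X : 'M[C]_(p, q)) i j i' j' :
  (X *m delta_mx j j' *m adj X) i i' = X i j * (X i' j')^*.
Proof.
rewrite mxE (bigD1 j') //= big1 ?addr0.
  rewrite !mxE (bigD1 j) //= big1 ?addr0; first by rewrite !mxE !eqxx mulr1.
  by move=> l /negbTE nl; rewrite mxE nl mulr0.
move=> c /negbTE nc; rewrite mxE big1 ?mul0r // => l _.
by rewrite mxE nc andbF mulr0.
Qed.

Lemma kraus_vec_mx_gram n p q (A B : 'I_n -> 'M[C]_(p, q)) :
  (forall rho, \sum_l A l *m rho *m adj (A l) = \sum_l B l *m rho *m adj (B l)) ->
  kraus_vec_mx A *m (kraus_vec_mx A)^t* = kraus_vec_mx B *m (kraus_vec_mx B)^t*.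
Proof.
move=> eqAB; apply/matrixP => r r'.
case/mxvec_indexP: r => i j; case/mxvec_indexP: r' => i' j'.
have /matrixP /(_ i i') := eqAB (delta_mx j j'); rewrite !summxE.
under eq_bigr do rewrite sandwich_delta.
under [in RHS]eq_bigr do rewrite sandwich_delta.
by move=> eq_entry; rewrite !mxE; under eq_bigr do rewrite !mxE !mxvecE;
  rewrite eq_entry; apply: eq_bigr => l _; rewrite !mxE !mxvecE.
Qed.

Lemma kraus_unitary_freedom n p q (A B : 'I_n -> 'M[C]_(p, q)) :
  (forall rho, \sum_l A l *m rho *m adj (A l) = \sum_l B l *m rho *m adj (B l)) ->
  exists2 W : 'M[C]_n, W \is unitarymx & B =1 kraus_mix W A.
Proof.
move=> /kraus_vec_mx_gram /unitary_freedom [W uW BAW]; exists W => // k.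
apply/matrixP => i j; have /matrixP /(_ (mxvec_index i j) k) := BAW.
rewrite mxE mxvecE => ->; rewrite mxE summxE; apply: eq_bigr => l _.
by rewrite !mxE mxvecE mulrC.
Qed.

Lemma unitarymx_unitary n (V : 'M[C]_n) : V \is unitarymx -> unitary V.
Proof.
move=> uV; rewrite /unitary adjE; split; last exact/unitarymxP.
by move: uV; rewrite -trmxC_unitary => /unitarymxP; rewrite trmxCK.
Qed.

Lemma complementary_unitary_equiv d e (U0 U : 'M[C]_(d * e, d)) :
  (forall rho, ptrace2 (U0 *m rho *m adj U0) = ptrace2 (U *m rho *m adj U)) ->
  exists V : 'M[C]_e, unitary V /\
    forall rho, complementary U rho = V *m complementary U0 rho *m adj V.
Proof.
move=> eq_ptrace2.
have [W uW UW] :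
    exists2 W : 'M[C]_e, W \is unitarymx & kraus U =1 kraus_mix W (kraus U0).
  by apply: kraus_unitary_freedom => rho; rewrite -!ptrace2_kraus.
exists W^T; split; first by apply: unitarymx_unitary; rewrite trmx_unitary.
move=> rho; rewrite !complementary_kraus (eq_kraus_gram _ UW) kraus_gram_mix.
by rewrite /adj /cconj map_trmx trmxK.
Qed.

End KrausFreedom.

Theorem lemma20 (C : numClosedFieldType) (d : nat) (chi : 'M[C]_(d * d))
  (Ech : 'M[C]_d -> 'M[C]_d)
  (chi_psd : psdmx chi)
  (Ech_def : forall rho, Ech rho = chi_channel chi rho)
  (Ech_TP : forall rho, \tr (Ech rho) = \tr rho) :
  (exists U : 'M[C]_(d * (d * d), d),
      isometric_extension Ech U /\
      forall rho, complementary U rho =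
        cconj (sqrtmx chi) *m rho_tilde rho *m cconj (sqrtmx chi)) /\
  (forall U : 'M[C]_(d * (d * d), d), isometric_extension Ech U ->
      exists V : 'M[C]_(d * d), unitary V /\
      forall rho, complementary U rho =
        V *m (cconj (sqrtmx chi) *m rho_tilde rho *m cconj (sqrtmx chi)) *m adj V).
Proof.
have [[S_herm _] S_sq] := sqrtmxP chi_psd.
have ext0 := chi_dilation_isometric_extension S_herm S_sq Ech_def Ech_TP.
split.
  exists (chi_dilation (sqrtmx chi)); split=> // rho.
  exact: complementary_chi_dilation.
move=> U [_ ptrace2_U].
have [|V [uV compU]] :=
  @complementary_unitary_equiv _ _ _ (chi_dilation (sqrtmx chi)) U.
  by move=> rho; rewrite (proj2 ext0) ptrace2_U.
by exists V; split=> // rho; rewrite compU complementary_chi_dilation.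
Qed.
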